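(* Let $A$ be a $*$-ring with a set of local $*$-units. Then $A$ is von Neumann regular and a locally Rickart $*$-ring if and only if $A$ is von Neumann regular and proper. Likewise, if $A$ is a $\Gamma$-graded $*$-ring with a set of graded local $*$-units, then $A$ is graded von Neumann regular and a graded locally Rickart $*$-ring if and only if $A$ is graded von Neumann regular and graded proper.
   Context: Projection: $p=p^2=p^*$. Local $*$-units: for every finite $F\subseteq A$ a projection $u$ with $ux=xu=x$ for $x\in F$ (homogeneous $u$ in the graded case, where $A=\bigoplus_\gamma A_\gamma$ is $\Gamma$-graded with $A_\gamma^*\subseteq A_{-\gamma}$). Von Neumann regular: for each $x$ there is $y$ with $xyx=x$; graded von Neumann regular: for each homogeneous $x$ there is homogeneous $y$ with $xyx=x$. Rickart $*$-ring: right annihilator of every element generated by a projection; graded Rickart $*$-ring: right annihilator of every homogeneous element generated by a homogeneous projection. Locally (graded) Rickart $*$-ring: $pAp$ is a (graded) Rickart $*$-ring for every (homogeneous) projection $p$. Proper: $xx^*=0\Rightarrow x=0$; graded proper: the same for homogeneous $x$. *)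

From HB Require Import structures.
From mathcomp Require Import all_boot all_order all_algebra.
Set Implicit Arguments. Unset Strict Implicit. Unset Printing Implicit Defensive.
Import GRing.Theory.
Local Open Scope ring_scope.

Record starRing := StarRing {
  sr_sort :> zmodType;
  sr_mul : sr_sort -> sr_sort -> sr_sort;
  sr_star : sr_sort -> sr_sort;
  sr_mulA : associative sr_mul;
  sr_mulDl : forall x y z, sr_mul (x + y) z = sr_mul x z + sr_mul y z;
  sr_mulDr : forall x y z, sr_mul x (y + z) = sr_mul x y + sr_mul x z;
  sr_starD : forall x y, sr_star (x + y) = sr_star x + sr_star y;
  sr_starK : forall x, sr_star (sr_star x) = x;
  sr_starM : forall x y, sr_star (sr_mul x y) = sr_mul (sr_star y) (sr_star x)
}.

Section Defs.
Variable A : starRing.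
Local Notation "x ** y" := (sr_mul x y) (at level 40, left associativity).
Local Notation "x ^#" := (sr_star x) (at level 2).

Definition is_projection (p : A) : Prop := p ** p = p /\ p ^# = p.

Definition in_corner (p x : A) : Prop := exists a : A, x = p ** a ** p.

Definition has_local_star_units : Prop :=
  forall F : seq A, exists u : A, is_projection u /\
    forall x, x \in F -> u ** x = x /\ x ** u = x.

Definition von_neumann_regular : Prop :=
  forall x : A, exists y : A, x ** y ** x = x.

Definition star_proper : Prop := forall x : A, x ** x ^# = 0 -> x = 0.

(* pAp is a Rickart *-ring (pAp is unital with unit p): the right annihilator
   in pAp of every x in pAp equals q(pAp) for some projection q of pAp. *)
Definition corner_rickart (p : A) : Prop :=
  forall x : A, in_corner p x ->
    exists q : A, is_projection q /\ in_corner p q /\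
      forall y : A, (in_corner p y /\ x ** y = 0) <->
                    (exists z : A, in_corner p z /\ y = q ** z).

Definition locally_rickart : Prop :=
  forall p : A, is_projection p -> corner_rickart p.

(* Gamma-gradings: A = (+)_g H g as an internal direct sum of additive
   subgroups, with H g * H d <= H (g + d) and (H g)^* <= H (- g). *)
Definition is_grading (G : zmodType) (H : G -> A -> Prop) : Prop :=
  (forall g, H g 0) /\
      (forall g x y, H g x -> H g y -> H g (x - y)) /\
      (forall x : A, exists (s : seq G) (f : G -> A),
          uniq s /\ (forall g, H g (f g)) /\ x = \sum_(g <- s) f g) /\
      (forall (s : seq G) (f : G -> A), uniq s -> (forall g, H g (f g)) ->
          \sum_(g <- s) f g = 0 -> forall g, g \in s -> f g = 0) /\
      (forall g d x y, H g x -> H d y -> H (g + d) (x ** y)) /\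
      (forall g x, H g x -> H (- g) (x ^#)).

Definition homogeneous (G : zmodType) (H : G -> A -> Prop) (x : A) : Prop :=
  exists g, H g x.

Definition has_graded_local_star_units (G : zmodType) (H : G -> A -> Prop)
  : Prop :=
  forall F : seq A, exists u : A, homogeneous H u /\ is_projection u /\
    forall x, x \in F -> u ** x = x /\ x ** u = x.

Definition graded_von_neumann_regular (G : zmodType) (H : G -> A -> Prop)
  : Prop :=
  forall x : A, homogeneous H x ->
    exists y : A, homogeneous H y /\ x ** y ** x = x.

Definition graded_proper (G : zmodType) (H : G -> A -> Prop) : Prop :=
  forall x : A, homogeneous H x -> x ** x ^# = 0 -> x = 0.

(* pAp (graded by p A_g p) is a graded Rickart *-ring: the right annihilator
   in pAp of every homogeneous x in pAp equals q(pAp) for a homogeneous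
   projection q of pAp. *)
Definition corner_graded_rickart (G : zmodType) (H : G -> A -> Prop) (p : A)
  : Prop :=
  forall x : A, in_corner p x -> homogeneous H x ->
    exists q : A, is_projection q /\ in_corner p q /\ homogeneous H q /\
      forall y : A, (in_corner p y /\ x ** y = 0) <->
                    (exists z : A, in_corner p z /\ y = q ** z).

Definition graded_locally_rickart (G : zmodType) (H : G -> A -> Prop) : Prop :=
  forall p : A, is_projection p -> homogeneous H p -> corner_graded_rickart H p.

End Defs.

(* The forward implications only use that x^# lies in the right annihilator of
   x when x x^# = 0: writing x^# = q z for the annihilator projection q gives
   x = z^# q = x q = 0.  Conversely, if x lies in the corner pAp and v is a
   regular inverse of x x^#, then properness applied to (p - v x x^#)^# x
   shows x^# v x x^# = x^#, so q := x^# v x is a projection with x q = x,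
   and p - q generates the right annihilator of x in pAp.  In the graded case
   every homogeneous projection has degree 0, so everything above can be
   chosen homogeneous once v is taken of degree 0: a degree-0 element that is
   also of degree d <> 0 vanishes. *)
From mathcomp Require Import all_boot all_order all_algebra.
Set Implicit Arguments. Unset Strict Implicit. Unset Printing Implicit Defensive.
Import GRing.Theory.
Local Open Scope ring_scope.

Section StarRingTheory.
Variable A : starRing.
Local Notation "x ** y" := (sr_mul x y) (at level 40, left associativity).
Local Notation "x ^#" := (sr_star x) (at level 2).

Lemma sr_mul0l (x : A) : 0 ** x = 0.
Proof.
have: 0 ** x + 0 ** x = 0 ** x + 0 by rewrite -sr_mulDl !addr0.
by move/addrI.
Qed.

Lemma sr_mul0r (x : A) : x ** 0 = 0.
Proof.
have: x ** 0 + x ** 0 = x ** 0 + 0 by rewrite -sr_mulDr !addr0.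
by move/addrI.
Qed.

Lemma sr_mulBl (x y z : A) : (x - y) ** z = x ** z - y ** z.
Proof.
apply/eqP; rewrite -subr_eq opprK -sr_mulDl.
by rewrite -addrA addNr addr0.
Qed.

Lemma sr_mulBr (x y z : A) : z ** (x - y) = z ** x - z ** y.
Proof.
apply/eqP; rewrite -subr_eq opprK -sr_mulDr.
by rewrite -addrA addNr addr0.
Qed.

Lemma sr_star0 : (0 : A)^# = 0.
Proof.
have: (0 : A)^# + 0^# = 0^# + 0 by rewrite -sr_starD !addr0.
by move/addrI.
Qed.

Lemma sr_starB (x y : A) : (x - y)^# = x^# - y^#.
Proof.
apply/eqP; rewrite -subr_eq opprK -sr_starD.
by rewrite -addrA addNr addr0.
Qed.

Lemma in_corner_unit (u x : A) : u ** x = x -> x ** u = x -> in_corner u x.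
Proof. by move=> ux xu; exists x; rewrite ux xu. Qed.

Section Corner.
Variable p : A.
Hypothesis projp : is_projection p.

Lemma projection_in_corner : in_corner p p.
Proof. by exists p; rewrite !(proj1 projp). Qed.

Lemma in_corner_mul (x : A) : in_corner p x -> p ** x = x /\ x ** p = x.
Proof.
case: projp => pp _ [a ->]; split; first by rewrite !sr_mulA pp.
by rewrite -!sr_mulA pp.
Qed.

Lemma in_corner_star (x : A) : in_corner p x -> in_corner p x^#.
Proof.
by case=> a ->; exists a^#; rewrite !sr_starM (proj2 projp) !sr_mulA.
Qed.

Lemma in_corner_mul_right (x y : A) :
  in_corner p x -> in_corner p y -> in_corner p (x ** y).
Proof.
move=> /in_corner_mul [px _] /in_corner_mul [_ yp].
by exists (x ** y); rewrite !sr_mulA px -sr_mulA yp.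
Qed.

Lemma corner_projection_compl (q : A) : is_projection q -> in_corner p q ->
  is_projection (p - q) /\ in_corner p (p - q).
Proof.
case: projp => pp ps [qq qs] /in_corner_mul [pq qp].
have proj_pq : is_projection (p - q).
  by split; rewrite ?sr_starB ?ps ?qs // !sr_mulBl !sr_mulBr pp pq qp qq subrr subr0.
by split=> //; exists (p - q); rewrite sr_mulBr pp pq sr_mulBl pp qp.
Qed.

Lemma in_corner_star_conj (a x : A) : in_corner p x -> in_corner p (x^# ** a ** x).
Proof.
move=> px; have [psE _] := in_corner_mul (in_corner_star px).
have [_ xpE] := in_corner_mul px.
by exists (x^# ** a ** x); rewrite !sr_mulA psE -!sr_mulA xpE.
Qed.

Lemma corner_rann_proper (x q : A) : in_corner p x ->
  is_projection q -> in_corner p q ->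
  (forall y, (in_corner p y /\ x ** y = 0) <->
             exists z, in_corner p z /\ y = q ** z) ->
  x ** x^# = 0 -> x = 0.
Proof.
move=> px [qq qs] pq rann xxs.
have [z [_ xs_qz]] : exists z, in_corner p z /\ x^# = q ** z.
  by apply/rann; split; first exact: in_corner_star.
have xq0 : x ** q = 0.
  suff [_ ->] : in_corner p q /\ x ** q = 0 by [].
  apply/rann; exists p; split; first exact: projection_in_corner.
  by rewrite (proj2 (in_corner_mul pq)).
have x_zq : x = z^# ** q by rewrite -[x]sr_starK xs_qz sr_starM qs.
by rewrite x_zq -qq sr_mulA -x_zq xq0.
Qed.

Section RegularInverse.
Variables x v : A.
Hypotheses (px : in_corner p x)
           (regv : x ** x^# ** v ** (x ** x^#) = x ** x^#).

Let w := p - v ** (x ** x^#).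

Let xsp : x^# ** p = x^# := proj2 (in_corner_mul (in_corner_star px)).

Lemma regular_defect_null : (w^# ** x) ** (w^# ** x)^# = 0.
Proof.
have xxs_w : x ** x^# ** w = 0.
  by rewrite /w sr_mulBr -(sr_mulA x) xsp sr_mulA regv subrr.
by rewrite sr_starM sr_starK -sr_mulA [x ** _]sr_mulA xxs_w sr_mul0r.
Qed.

Lemma regular_defect_eq0 : w^# ** x = 0 -> x^# ** v ** x ** x^# = x^#.
Proof.
move=> /(congr1 (@sr_star A)); rewrite sr_starM sr_starK sr_star0.
rewrite /w sr_mulBr xsp => /eqP; rewrite subr_eq0 => /eqP xsE.
by rewrite [in RHS]xsE !sr_mulA.
Qed.

Hypothesis xsE : x^# ** v ** x ** x^# = x^#.

Let q := x^# ** v ** x.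

Lemma regular_projection : is_projection q.
Proof.
have qq : q ** q = q by rewrite /q !sr_mulA xsE.
have qqs : q ** q^# = q^# by rewrite /q !sr_starM sr_starK !sr_mulA xsE.
split=> //; by rewrite -[q in RHS]sr_starK -qqs sr_starM sr_starK qqs.
Qed.

Lemma regular_mul_projection : x ** q = x.
Proof.
have := congr1 (@sr_star A) xsE; rewrite sr_starM sr_starK -/q.
by rewrite (proj2 regular_projection).
Qed.

Lemma regular_corner_rann (y : A) :
  (in_corner p y /\ x ** y = 0) <->
  exists z, in_corner p z /\ y = (p - q) ** z.
Proof.
have [projc pc] := corner_projection_compl regular_projection
  (in_corner_star_conj v px).
split.
  move=> [py xy0]; exists y; split=> //.
  by rewrite sr_mulBl (proj1 (in_corner_mul py)) /q -sr_mulA xy0 sr_mul0r subr0.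
move=> [z [pz ->]]; split; first exact: in_corner_mul_right.
by rewrite sr_mulA sr_mulBr (proj2 (in_corner_mul px)) regular_mul_projection
  subrr sr_mul0l.
Qed.

End RegularInverse.
End Corner.

Lemma locally_rickart_proper :
  has_local_star_units A -> locally_rickart A -> star_proper A.
Proof.
move=> units lr x xxs.
have [u [proju /(_ x (mem_head _ _)) [ux xu]]] := units [:: x].
have ux_c := in_corner_unit ux xu.
have [q [projq [uq rann]]] := lr u proju x ux_c.
exact: (corner_rann_proper proju ux_c projq uq rann).
Qed.

Lemma regular_proper_locally_rickart :
  von_neumann_regular A -> star_proper A -> locally_rickart A.
Proof.
move=> reg proper p projp x px.
have [v regv] := reg (x ** x^#).
have xsE := regular_defect_eq0 projp px
  (proper _ (regular_defect_null projp px regv)).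
exists (p - x^# ** v ** x).
have [projc pc] := corner_projection_compl projp (regular_projection xsE)
  (in_corner_star_conj projp v px).
by split=> //; split=> // y; exact: regular_corner_rann.
Qed.

Section Graded.
Variables (G : zmodType) (H : G -> A -> Prop).
Hypothesis grH : is_grading H.

Lemma grading_sub g (x y : A) : H g x -> H g y -> H g (x - y).
Proof. by case: grH => _ [sub _]; apply: sub. Qed.

Lemma grading_mul g d (x y : A) : H g x -> H d y -> H (g + d) (x ** y).
Proof. by case: grH => _ [_ [_ [_ [mul _]]]]; apply: mul. Qed.

Lemma grading_star g (x : A) : H g x -> H (- g) x^#.
Proof. by case: grH => _ [_ [_ [_ [_ star]]]]; apply: star. Qed.

Lemma grading_mul_star g (x : A) : H g x -> H 0 (x ** x^#).
Proof. by move=> Hx; rewrite -(subrr g); exact: grading_mul (grading_star Hx). Qed.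

Lemma grading_disjoint g d (y : A) : H g y -> H d y -> g != d -> y = 0.
Proof.
case: grH => H0 [_ [_ [indep _]]] Hgy Hdy gd.
pose f k := if k == g then y else if k == d then - y else 0.
have Hf k : H k (f k).
  rewrite /f; case: eqP => [-> //|_]; case: eqP => [-> |_] //.
  by rewrite -sub0r; exact: grading_sub.
have := indep [:: g; d] f; rewrite /= inE gd /= => /(_ isT Hf).
rewrite !big_cons big_nil /f eqxx eq_sym (negbTE gd) eqxx addr0 addrN.
by move=> /(_ erefl g); rewrite inE eqxx => /(_ isT).
Qed.

Lemma homogeneous_projection_deg0 (q : A) :
  is_projection q -> homogeneous H q -> H 0 q.
Proof.
move=> [qq qs] [g Hq].
by have := grading_mul Hq (grading_star Hq); rewrite qs qq subrr.
Qed.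

Lemma graded_regular_deg0 (a : A) : graded_von_neumann_regular H -> H 0 a ->
  exists v, H 0 v /\ a ** v ** a = a.
Proof.
move=> reg Ha; have [v [[d Hv] ava]] := reg a (ex_intro _ 0 Ha).
have [d0 | d0] := eqVneq d 0; first by exists v; rewrite -d0.
have Hava := grading_mul (grading_mul Ha Hv) Ha.
rewrite add0r addr0 ava in Hava.
exists 0; split; first by case: grH.
by rewrite (grading_disjoint Hava Ha d0) !sr_mul0l.
Qed.

Lemma graded_locally_rickart_proper :
  has_graded_local_star_units H -> graded_locally_rickart H -> graded_proper H.
Proof.
move=> units lr x hx xxs.
have [u [hu [proju /(_ x (mem_head _ _)) [ux xu]]]] := units [:: x].
have ux_c := in_corner_unit ux xu.
have [q [projq [uq [_ rann]]]] := lr u proju hu x ux_c hx.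
exact: (corner_rann_proper proju ux_c projq uq rann).
Qed.

Lemma graded_regular_proper_locally_rickart :
  graded_von_neumann_regular H -> graded_proper H -> graded_locally_rickart H.
Proof.
move=> reg proper p projp hp x px [g Hx].
have Hp := homogeneous_projection_deg0 projp hp.
have [v [Hv regv]] := graded_regular_deg0 reg (grading_mul_star Hx).
have Hdefect : H g ((p - v ** (x ** x^#))^# ** x).
  rewrite -[g]add0r -{1}oppr0; apply/grading_mul/Hx/grading_star/grading_sub=> //.
  by rewrite -[0]addr0; exact: grading_mul (grading_mul_star Hx).
have xsE := regular_defect_eq0 projp px
  (proper _ (ex_intro _ g Hdefect) (regular_defect_null projp px regv)).
have projq := regular_projection xsE.
have pq := in_corner_star_conj projp v px.
have [projc pc] := corner_projection_compl projp projq pq.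
exists (p - x^# ** v ** x); do 3!split=> //; last exact: regular_corner_rann.
exists 0; apply: grading_sub=> //; apply: homogeneous_projection_deg0 => //.
exists (- g + 0 + g); do 2!apply: grading_mul=> //; exact: grading_star.
Qed.

End Graded.
End StarRingTheory.

Theorem mainTheorem9 :
  (forall A : starRing, has_local_star_units A ->
     (von_neumann_regular A /\ locally_rickart A <->
      von_neumann_regular A /\ star_proper A)) /\
  (forall (A : starRing) (G : zmodType) (H : G -> A -> Prop),
     is_grading H -> has_graded_local_star_units H ->
     (graded_von_neumann_regular H /\ graded_locally_rickart H <->
      graded_von_neumann_regular H /\ graded_proper H)).
Proof.
split=> [A units | A G H grH units]; split=> -[reg P]; split=> //.
- exact: locally_rickart_proper.
- exact: regular_proper_locally_rickart.
- exact: graded_locally_rickart_proper.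
- exact: graded_regular_proper_locally_rickart.
Qed.
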